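(* Let $K, L, \Gamma, \Delta, P, \Lambda$ be positive integers with $\Gamma \le L$, $\Delta \le K$, $\Lambda \le P$, $\Delta \mid K$ and $\Lambda \mid P$. Let $\bar{\mathcal{F}} \in \mathbb{R}^{K \times P \times \cdots \times P}$ (with $L$ modes of size $P$ after the first) be any demand tensor, $\bar{\mathcal{F}}(k,\underline{\mathbf{p}}) = c_{k,\underline{\mathbf{p}}}$, whose entries vanish at every index $(k,\underline{\mathbf{p}})$ for which more than $\Gamma$ coordinates of $\underline{\mathbf{p}}=(p_1,\dots,p_L)\in[P]^L$ are active (differ from $1$). Then there exist an integer $$N \le \frac{K}{\Delta}\binom{L}{\Gamma}\min\big(\Delta,\Lambda^{\Gamma}\big)\Big(\frac{P}{\Lambda}\Big)^{\Gamma},$$ a decoding matrix $\mathbf{D}\in\mathbb{R}^{K\times N}$ and an encoding tensor $\bar{\mathcal{E}}\in\mathbb{R}^{N\times P\times\cdots\times P}$ such that $\bar{\mathcal{F}} = \bar{\mathcal{E}}\times_1 \mathbf{D}$ (lossless recovery of all $K$ demands) and, for every $n\in[N]$: (i) the column $\mathbf{D}(:,n)$ has at most $\Delta$ nonzero entries; (ii) there is a set $\mathcal{S}_n\subseteq[L]$ with $|\mathcal{S}_n|\le\Gamma$ such that $\bar{\mathcal{E}}(n,\underline{\mathbf{p}})\neq 0$ only if all coordinates $p_\ell$ with $\ell\notin\mathcal{S}_n$ are inactive (equal to $1$); (iii) for each $\ell\in\mathcal{S}_n$, writing $\mathcal{P}_n=\{\underline{\mathbf{p}}:\bar{\mathcal{E}}(n,\underline{\mathbf{p}})\neq0\}$,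 one has $\max_{\underline{\mathbf{p}}\in\mathcal{P}_n}p_\ell-\min_{\underline{\mathbf{p}}\in\mathcal{P}_n}p_\ell+1\le\Lambda$. Consequently the system rate $R=K/N$ is achievable.
   Context: Distributed computing setting: $K$ users, $N$ servers, $L$ real basis subfunctions with outputs $W_1,\dots,W_L$. User $k$ requests $F_k=\sum_{\underline{\mathbf{p}}\in[P]^L} c_{k,\underline{\mathbf{p}}}\prod_{\ell\in[L]}W_\ell^{p_\ell}$; the coefficients form the order-$(L+1)$ tensor $\bar{\mathcal{F}}$. Server $n$ computes the subfunctions in $\mathcal{S}_n$ and the monomials indexed by $\mathcal{P}_n$, transmits $z_n=\sum_{\underline{\mathbf{p}}\in\mathcal{P}_n}e_{n,\underline{\mathbf{p}}}\prod_\ell W_\ell^{p_\ell}$ (with $\bar{\mathcal{E}}(n,\underline{\mathbf{p}})=e_{n,\underline{\mathbf{p}}}$) to at most $\Delta$ users, and user $k$ forms $F'_k=\sum_n d_{k,n}z_n$ with $\mathbf{D}=(d_{k,n})$; error-free recovery for all demands is equivalent to $\bar{\mathcal{F}}=\bar{\mathcal{E}}\times_1\mathbf{D}$. Constraints: computation cost $\Gamma$ (number of subfunctions per server), communication cost $\Delta$ (users per server), multiplication cost $\Lambda$ (range of exponents of each computed subfunction per server). The mode-1 product $\bar{\mathcal{E}}\times_1\mathbf{D}$ is defined by unfolding $\bar{\mathcal{E}}$ along mode 1 into $\bar{\mathcal{E}}_{(1)}\in\mathbb{R}^{N\times P^L}$, computing $\mathbf{D}\bar{\mathcal{E}}_{(1)}$,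 and folding back to a $K\times P\times\cdots\times P$ tensor; equivalently $(\bar{\mathcal{E}}\times_1\mathbf{D})(k,\underline{\mathbf{p}})=\sum_n d_{k,n}\bar{\mathcal{E}}(n,\underline{\mathbf{p}})$. The system rate is $R=K/N$. *)

(* Exponent index p_l in [P] = {1..P} is encoded as i : 'I_P
   with value i = p_l - 1; "inactive" (p_l = 1) means val i = 0. *)
From HB Require Import structures.
From mathcomp Require Import all_boot all_order all_algebra.
From mathcomp Require Import reals.
Set Implicit Arguments. Unset Strict Implicit. Unset Printing Implicit Defensive.
Import Order.TTheory GRing.Theory Num.Theory.
Local Open Scope ring_scope.

Definition midx (L P : nat) := {ffun 'I_L -> 'I_P}.

Definition active (L P : nat) (p : midx L P) (l : 'I_L) : bool := (val (p l) != 0)%N.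

Definition num_active (L P : nat) (p : midx L P) : nat := #|[set l | active p l]|.

Definition mode1_prod (R : ringType) (K N L P : nat)
  (E : 'I_N -> midx L P -> R) (D : 'M[R]_(K, N)) : 'I_K -> midx L P -> R :=
  fun k p => \sum_(n < N) D k n * E n p.

From HB Require Import structures.
From mathcomp Require Import all_boot all_order all_algebra.
From mathcomp Require Import reals.
From mathcomp Require Import zify.
From Stdlib Require Import FunctionalExtensionality.
Set Implicit Arguments. Unset Strict Implicit. Unset Printing Implicit Defensive.
Import Order.TTheory GRing.Theory Num.Theory.
Local Open Scope ring_scope.

(* Split the users into groups of Delta consecutive users, and the
   monomials with at most Gamma active coordinates into cells: a cell fixes a set
   S of exactly Gamma coordinates containing every active one and, for each
   coordinate, the window of Lambda consecutive exponents it lies in.  A single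
   server can serve a (group, cell) block of the demand tensor whenever that
   block has rank one, which holds if the group or the cell is a singleton.
   Singleton groups give K * 'C(L, Gamma) * (P/Lambda)^Gamma servers, singleton
   cells (one monomial each) give (K/Delta) * 'C(L, Gamma) * P^Gamma servers; the
   first count is the bound when Delta <= Lambda^Gamma, the second otherwise. *)

Section Padding.
Variable T : finType.
Implicit Types (A B : {set T}) (n : nat).

Lemma exists_superset_card A n : (#|A| <= n <= #|T|)%N ->
  exists2 B : {set T}, A \subset B & #|B| = n.
Proof.
case/andP=> leAn lenT.
have : (n - #|A| <= #|~: A|)%N by have := cardsC A; lia.
case/card_geqP=> s [uniq_s size_s sA'].
exists (A :|: [set x in s]); first exact: subsetUl.
have disjA : A :&: [set x in s] = set0.
  apply/eqP; rewrite setI_eq0 disjoint_sym disjoints_subset.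
  by apply/subsetP=> x; rewrite inE => /sA'.
by rewrite cardsU disjA cards0 subn0 cardsE (card_uniqP uniq_s); lia.
Qed.

(* Padding to exactly [n] elements is what lets ['C(L, Gamma)] count the cells;
   when no such superset exists, [pad n A] is [A] itself. *)
Definition pad n A : {set T} :=
  odflt A [pick B : {set T} | (A \subset B) && (#|B| == n)].

Lemma subset_pad n A : A \subset pad n A.
Proof. by rewrite /pad; case: pickP => [B /andP[]|]. Qed.

Lemma card_pad n A : (#|A| <= n <= #|T|)%N -> #|pad n A| = n.
Proof.
move=> /exists_superset_card[B sAB cB]; rewrite /pad; case: pickP => [B' /andP[_ /eqP]//|].
by move=> /(_ B); rewrite sAB cB eqxx.
Qed.

End Padding.

Definition active_set (L m : nat) (p : midx L m) : {set 'I_L} := [set l | active p l].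

Definition cells (L m n : nat) : {set {set 'I_L} * midx L m} :=
  [set c : {set 'I_L} * midx L m | (#|c.1| == n) && (active_set c.2 \subset c.1)].

Lemma card_cells (L m n : nat) : (0 < m)%N ->
  #|cells L m n| = ('C(L, n) * m ^ n)%N.
Proof.
move=> m_gt0; pose y0 := Ordinal m_gt0.
rewrite cardsE -sum1_card -(pair_big_dep (fun S : {set 'I_L} => #|S| == n)
                       (fun S p => active_set p \subset S) (fun _ _ => 1%N)) /=.
rewrite (eq_bigr (fun _ => m ^ n)%N) => [|S /eqP cardS].
  rewrite sum_nat_const -[X in 'C(X, _)]card_ord -card_draws.
  by congr (_ * _)%N; apply: eq_card => S; rewrite inE.
rewrite sum1_card -cardS -[X in (X ^ _)%N]card_ord -(card_pffun_on y0 S predT).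
have supp_y0 (p : midx L m) : y0.-support p =i active_set p.
  by move=> l; rewrite !inE /active -val_eqE.
apply: eq_card => p; apply/idP/pffun_onP => [suppS | [suppS _]].
  by split=> //; rewrite (eq_subset (supp_y0 p)).
by rewrite unfold_in /= -(eq_subset (supp_y0 p)).
Qed.

Section Servers.
Variables (R : nzRingType) (K L P Gamma Delta Lambda : nat).

Definition cell_ok (M : pred (midx L P)) : Prop :=
  exists S : {set 'I_L},
    (#|S| <= Gamma)%N /\
    (forall p, M p -> forall l, l \notin S -> ~~ active p l) /\
    (forall l, l \in S -> forall p q, M p -> M q ->
       (val (p l) + 1 <= val (q l) + Lambda)%N).

Definition server_ok (d : 'I_K -> R) (e : midx L P -> R) : Prop :=
  (#|[set k | d k != 0%R]| <= Delta)%N /\ cell_ok (fun p => e p != 0).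

Definition realizable (F : 'I_K -> midx L P -> R) (N : nat) : Prop :=
  exists (D : 'M[R]_(K, N)) (E : 'I_N -> midx L P -> R),
    F = mode1_prod E D /\ forall n : 'I_N, server_ok (fun k => D k n) (E n).

Lemma cell_ok_sub (M M' : pred (midx L P)) :
  (forall p, M' p -> M p) -> cell_ok M -> cell_ok M'.
Proof.
move=> sM'M [S [cardS [outS rangeS]]]; exists S; split=> //.
by split=> [p /sM'M | l lS p q /sM'M Mp /sM'M Mq]; [exact: outS | exact: rangeS].
Qed.

Lemma realizable_sum (T : finType) (A : {set T}) (F : 'I_K -> midx L P -> R)
    (d : T -> 'I_K -> R) (e : T -> midx L P -> R) :
  (forall k p, F k p = \sum_(t in A) d t k * e t p) ->
  (forall t, t \in A -> server_ok (d t) (e t)) ->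
  realizable F #|A|.
Proof.
move=> F_sum ok_de.
exists (\matrix_(k, n) d (enum_val n) k), (fun n => e (enum_val n)); split.
  apply: functional_extensionality => k; apply: functional_extensionality => p.
  by rewrite F_sum big_enum_val; apply: eq_bigr => n _; rewrite mxE.
move=> n; have [card_d ok_e] := ok_de _ (enum_valP n); split=> //.
by rewrite (eq_card (B := [set k | d (enum_val n) k != 0%R])) // => k; rewrite !inE mxE.
Qed.

Section Blocks.
Variables (G C : finType) (group : 'I_K -> G) (cell : midx L P -> C) (A : {set C}).
Variables (F : 'I_K -> midx L P -> R) (d : G -> C -> 'I_K -> R) (e : G -> C -> midx L P -> R).
Hypothesis card_group : forall g, (#|[set k | group k == g]| <= Delta)%N.
Hypothesis cell_okA : forall c, c \in A -> cell_ok (fun p => cell p == c).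
Hypothesis F_cells : forall k p, F k p != 0 -> cell p \in A.
Hypothesis d_out : forall g c k, group k != g -> d g c k = 0.
Hypothesis e_out : forall g c p, cell p != c -> e g c p = 0.
Hypothesis F_block : forall k p, F k p = d (group k) (cell p) k * e (group k) (cell p) p.

Lemma realizable_blocks : realizable F (#|G| * #|A|).
Proof.
rewrite -cardsT -cardsX.
apply: (@realizable_sum _ _ _ (fun t => d t.1 t.2) (fun t => e t.1 t.2)) => [k p|].
  have off_block g c : (g, c) != (group k, cell p) -> d g c k * e g c p = 0.
    rewrite xpair_eqE negb_and => /orP[gk | cp].
      by rewrite d_out ?mul0r // eq_sym.
    by rewrite e_out ?mulr0 // eq_sym.
  have [pA | pA'] := boolP (cell p \in A).
    rewrite (bigD1 (group k, cell p)) ?in_setX ?in_setT ?pA //= -F_block.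
    by rewrite big1 ?addr0 // => -[g c] /andP[_]; apply: off_block.
  have -> : F k p = 0 by apply/eqP; apply: contraNT pA'; apply: F_cells.
  rewrite big1 // => -[g c]; rewrite in_setX => /andP[_ cA] /=.
  by rewrite e_out ?mulr0 //; apply: contraNneq pA' => ->.
move=> [g c]; rewrite in_setX => /andP[_ cA]; split.
  apply: leq_trans (card_group g); apply: subset_leq_card; apply/subsetP=> k.
  by rewrite !inE; apply: contraR => /d_out ->; rewrite eqxx.
by apply: cell_ok_sub (cell_okA cA) => p; apply: contraR => /e_out ->; rewrite eqxx.
Qed.

End Blocks.
End Servers.

Section QuotientOrdinal.
Variables (n d : nat) (d_gt0 : (0 < d)%N) (d_dvd : (d %| n)%N).

Lemma quot_ord_subproof (i : 'I_n) : (i %/ d < n %/ d)%N.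
Proof. by rewrite ltn_divLR // divnK. Qed.

Definition quot_ord (i : 'I_n) : 'I_(n %/ d) := Ordinal (quot_ord_subproof i).

Lemma card_quot_ord_fiber (j : 'I_(n %/ d)) :
  (#|[set i | quot_ord i == j]| <= d)%N.
Proof.
rewrite -[d in (_ <= d)%N]card_ord.
apply: (@leq_card_in _ _ (fun i : 'I_n => Ordinal (ltn_pmod i d_gt0))) => i i'.
rewrite !inE => /eqP ij /eqP i'j [] eq_mod; apply: val_inj.
have eq_div : (i %/ d = i' %/ d)%N by rewrite -[LHS]/(val (quot_ord i)) ij -i'j.
by rewrite /= (divn_eq i d) (divn_eq i' d) eq_mod eq_div.
Qed.

Lemma quot_ord_near (i i' : 'I_n) : quot_ord i = quot_ord i' ->
  (val i + 1 <= val i' + d)%N.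
Proof.
move/(congr1 val) => /= eq_div.
by have := divn_eq i d; have := divn_eq i' d; have := ltn_pmod i d_gt0; lia.
Qed.

End QuotientOrdinal.

Section CellMap.
Variables (L P m Gamma Lambda : nat) (f : midx L P -> midx L m).
Hypothesis f_active : forall p l, active (f p) l -> active p l.
Hypothesis f_near : forall p q l, f p l = f q l -> (val (p l) + 1 <= val (q l) + Lambda)%N.

Definition cell_of (p : midx L P) : {set 'I_L} * midx L m := (pad Gamma (active_set p), f p).

Lemma cell_of_in_cells p : (Gamma <= L)%N -> (num_active p <= Gamma)%N ->
  cell_of p \in cells L m Gamma.
Proof.
move=> GL p_low; rewrite inE /= card_pad ?card_ord ?p_low //= eqxx /=.
apply: subset_trans (subset_pad _ _); apply/subsetP=> l.
by rewrite !inE; apply: f_active.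
Qed.

Lemma cell_ok_cell_of c : c \in cells L m Gamma ->
  cell_ok Gamma Lambda (fun p => cell_of p == c).
Proof.
case: c => S b; rewrite inE /= => /andP[/eqP cardS _].
exists S; split; first by rewrite cardS.
split=> [p /eqP[<- _] l lS | l _ p q /eqP[_ fp] /eqP[_ fq]].
  by apply: contra lS => lp; apply: (subsetP (subset_pad _ _)); rewrite inE.
by apply: f_near; rewrite fp fq.
Qed.

End CellMap.

Section Schemes.
Variables (R : nzRingType) (K L P Gamma Delta Lambda : nat).
Variable F : 'I_K -> midx L P -> R.
Hypotheses (Delta_gt0 : (0 < Delta)%N) (Lambda_gt0 : (0 < Lambda)%N).
Hypothesis Lambda_le_P : (Lambda <= P)%N.
Hypothesis Gamma_le_L : (Gamma <= L)%N.
Hypothesis F_low : forall k p, (Gamma < num_active p)%N -> F k p = 0.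

Lemma F_neq0_cell_of_in m (f : midx L P -> midx L m) k p :
  (forall p l, active (f p) l -> active p l) ->
  F k p != 0 -> cell_of Gamma f p \in cells L m Gamma.
Proof.
move=> f_active Fkp; apply: cell_of_in_cells => //.
by rewrite leqNgt; apply: contra Fkp => /F_low ->.
Qed.

Lemma realizable_per_user (Lambda_dvd : (Lambda %| P)%N) :
  realizable Gamma Delta Lambda F (K * ('C(L, Gamma) * (P %/ Lambda) ^ Gamma)).
Proof.
pose blocks (p : midx L P) : midx L (P %/ Lambda) :=
  [ffun l => quot_ord Lambda_gt0 Lambda_dvd (p l)].
have blocks_active p l : active (blocks p) l -> active p l.
  by rewrite /active ffunE; apply: contra => /eqP /= ->; rewrite div0n.
have blocks_near p q l : blocks p l = blocks q l -> (val (p l) + 1 <= val (q l) + Lambda)%N.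
  by rewrite !ffunE; apply: quot_ord_near.
pose cell := cell_of Gamma blocks.
rewrite -[X in (X * _)%N]card_ord -card_cells ?divn_gt0 //.
apply: (realizable_blocks (group := id) (cell := cell)
         (d := fun g _ k => (k == g)%:R) (e := fun g c p => (cell p == c)%:R * F g p)).
- by move=> g; rewrite (eq_card (B := [set g])) ?cards1 // => k; rewrite !inE.
- by move=> c; apply: cell_ok_cell_of.
- by move=> k p; apply: F_neq0_cell_of_in.
- by move=> g c k /negbTE ->.
- by move=> g c p /negbTE ->; rewrite mul0r.
- by move=> k p; rewrite !eqxx mul1r mul1r.
Qed.

Lemma realizable_per_monomial (Delta_dvd : (Delta %| K)%N) :
  realizable Gamma Delta Lambda F (K %/ Delta * ('C(L, Gamma) * P ^ Gamma)).
Proof.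
pose group := quot_ord Delta_gt0 Delta_dvd.
pose cell := cell_of Gamma (@id (midx L P)).
rewrite -[X in (X * _)%N]card_ord -card_cells; last exact: leq_trans Lambda_le_P.
apply: (realizable_blocks (group := group) (cell := cell)
         (d := fun g c k => (group k == g)%:R * F k c.2) (e := fun g c p => (cell p == c)%:R)).
- exact: card_quot_ord_fiber.
- by move=> c; apply: cell_ok_cell_of => // p q l ->; rewrite leq_add2l.
- by move=> k p; apply: F_neq0_cell_of_in.
- by move=> g c k /negbTE ->; rewrite mul0r.
- by move=> g c p /negbTE ->.
- by move=> k p; rewrite !eqxx mul1r mulr1.
Qed.

End Schemes.

Theorem theorem1 (R : realType) (K L Gamma Delta P Lambda : nat)
  (hK : (0 < K)%N) (hL : (0 < L)%N) (hG : (0 < Gamma)%N) (hD : (0 < Delta)%N)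
  (hP : (0 < P)%N) (hLa : (0 < Lambda)%N)
  (hGL : (Gamma <= L)%N) (hDK : (Delta <= K)%N) (hLaP : (Lambda <= P)%N)
  (hDdvd : (Delta %| K)%N) (hLadvd : (Lambda %| P)%N)
  (F : 'I_K -> midx L P -> R)
  (hF : forall k p, (Gamma < num_active p)%N -> F k p = 0) :
  exists N : nat,
    (N <= (K %/ Delta) * 'C(L, Gamma) * minn Delta (Lambda ^ Gamma)
            * (P %/ Lambda) ^ Gamma)%N /\
    exists (D : 'M[R]_(K, N)) (E : 'I_N -> midx L P -> R),
      F = mode1_prod E D /\
      forall n : 'I_N,
        (#|[set k | D k n != 0%R]| <= Delta)%N /\
        exists S : {set 'I_L},
          (#|S| <= Gamma)%N /\
          (forall p, E n p != 0 -> forall l, l \notin S -> ~~ active p l) /\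
          (forall l, l \in S -> forall p q, E n p != 0 -> E n q != 0 ->
             (val (p l) + 1 <= val (q l) + Lambda)%N).
Proof.
case: (leqP Delta (Lambda ^ Gamma)%N) => _.
  exists (K * ('C(L, Gamma) * (P %/ Lambda) ^ Gamma))%N; split.
    by rewrite -{1}(divnK hDdvd); lia.
  exact: realizable_per_user hD hLa hLaP hGL hF hLadvd.
exists (K %/ Delta * ('C(L, Gamma) * P ^ Gamma))%N; split.
  by rewrite -{1}(divnK hLadvd) expnMn; lia.
exact: realizable_per_monomial hD hLa hLaP hGL hF hDdvd.
Qed.
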